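(* Let $q\in\mathbb C$ with $|q-1|>1$, let $\rho=1/|1-q|$, and let $\mathcal C_q=\{v/(q+v): v\in[-1,0]\}$. Then a complex number $t$ has the property that, for every $s\in D(\rho)$, $1+(q-1)ts\neq0$ and $t\|_q s\in D(\rho)$, if and only if $t\in\mathcal C_q$. In particular $\{t\|_q s: t\in\mathcal C_q, s\in D(\rho)\}\subseteq D(\rho)$, and $\mathcal C_q$ is the largest subset of $\mathbb C$ with this property.
   Context: $D(r)=\{t\in\mathbb C:|t|\le r\}$. For $t,s\in\mathbb C$ with $1+(q-1)ts\neq0$, $t\|_q s=\dfrac{t+s+(q-2)ts}{1+(q-1)ts}$ (the parallel connection of transmissivities). Note $q+v\ne0$ for $v\in[-1,0]$ since $|q-1|>1$. *)

(* The complex numbers are modelled by an arbitrary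
   numClosedFieldType C (e.g. algC). *)
From HB Require Import structures.
From mathcomp Require Import all_boot all_order all_algebra.
Set Implicit Arguments. Unset Strict Implicit. Unset Printing Implicit Defensive.
Import Order.TTheory GRing.Theory Num.Theory.
Local Open Scope ring_scope.

Definition disk (C : numClosedFieldType) (r : C) (t : C) : Prop := `|t| <= r.

Definition parq (C : numClosedFieldType) (q t s : C) : C :=
  (t + s + (q - 2) * t * s) / (1 + (q - 1) * t * s).

Definition Cq (C : numClosedFieldType) (q t : C) : Prop :=
  exists v : C, v \is Num.real /\ -1 <= v /\ v <= 0 /\ t = v / (q + v).

From HB Require Import structures.
From mathcomp Require Import all_boot all_order all_algebra.
From mathcomp Require Import ring.
Set Implicit Arguments. Unset Strict Implicit. Unset Printing Implicit Defensive.
Import Order.TTheory GRing.Theory Num.Theory.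
Local Open Scope ring_scope.

(* Write a := q - 1, so |a| > 1 and rho = 1/|a|.  The proof linearises the
   parallel connection by the Moebius change of variable
       t = mob Y := (Y - 1) / (Y + a),
   under which  1 + a (mob Y) (mob Z) = q (YZ + a) / ((Y + a)(Z + a))  and
   (mob Y) ||_q (mob Z) = mob (Y Z): the parallel connection becomes
   multiplication.  The disk D(rho) corresponds to the closed disk of centre
   c := (|a|^2 + a) / (|a|^2 - 1) and radius |c|, a disk through the origin
   which does not contain -a.  Hence t = mob y satisfies the closure property
   iff multiplication by y maps that disk into itself, and a disk through the
   origin is stable under multiplication by y iff y is in [0,1] (convexity for
   one direction, the equality case of the triangle inequality for the
   other). *)

Section DiskThroughOrigin.
Variable C : numClosedFieldType.

(* Equality case of the triangle inequality for 1 = y + (1 - y). *)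
Lemma segment_of_norm_sum (y : C) : `|y| + `|1 - y| <= 1 -> 0 <= y <= 1.
Proof.
move=> hle.
have hsum : `|y + (1 - y)| = `|y| + `|1 - y|.
  by apply/eqP; rewrite eq_le ler_normD subrKC normr1 hle.
have [k _ [ey ey1]] := normCDeq hsum.
have k1 : k = 1.
  have e : (`|y| + `|1 - y|) * k = 1 by rewrite mulrDl -ey -ey1 subrKC.
  by rewrite -hsum subrKC normr1 mul1r in e.
apply/andP; split; first by rewrite ey k1 mulr1.
by rewrite -subr_ge0 ey1 k1 mulr1.
Qed.

(* If y maps the disk |w - 1| <= 1 into itself, then |y| + |1 - y| <= 1:
   test the boundary point 1 + e where y e points in the direction of y - 1. *)
Lemma stable_norm_sum (y : C) :
  (forall w : C, `|w - 1| <= 1 -> `|y * w - 1| <= 1) -> `|y| + `|1 - y| <= 1.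
Proof.
move=> stable.
have [->|y0] := eqVneq y 0; first by rewrite normr0 subr0 normr1 add0r.
have [->|y1] := eqVneq y 1; first by rewrite subrr normr0 normr1 addr0.
have ny1 : `|y - 1| != 0 by rewrite normr_eq0 subr_eq0.
pose w := 1 + `|y| * (y - 1) / (y * `|y - 1|).
have hw : `|w - 1| <= 1.
  by rewrite /w addrAC subrr add0r normf_div !normrM !normr_id divff // mulf_neq0 // normr_eq0.
have ew : y * w - 1 = (y - 1) * (1 + `|y| / `|y - 1|).
  by rewrite /w; field; rewrite y0 ny1.
have := stable w hw.
rewrite ew normrM [`|1 + _|]ger0_norm ?addr_ge0 ?divr_ge0 //.
by rewrite mulrDr mulr1 mulrCA divff // mulr1 distrC addrC.
Qed.

Lemma unit_disk_stableP (y : C) :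
  (forall w : C, `|w - 1| <= 1 -> `|y * w - 1| <= 1) <-> 0 <= y <= 1.
Proof.
split=> [/stable_norm_sum/segment_of_norm_sum //|/andP[y0 y1] w hw].
have -> : y * w - 1 = y * (w - 1) - (1 - y) by ring.
apply: le_trans (ler_normB _ _) _.
rewrite normrM (ger0_norm y0) (@ger0_norm _ (1 - y)) ?subr_ge0 //.
by rewrite -[X in _ <= X](subrKC y 1) lerD2r ler_piMr.
Qed.

(* The same for any closed disk |Z - c| <= |c| through the origin (c != 0),
   obtained by the rescaling Z = c w. *)
Lemma disk_through_origin_stableP (c y : C) : c != 0 ->
  (forall Z : C, `|Z - c| <= `|c| -> `|y * Z - c| <= `|c|) <-> 0 <= y <= 1.
Proof.
move=> c0; have nc0 : 0 < `|c| by rewrite normr_gt0.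
have scale w : (`|c * w - c| <= `|c|) = (`|w - 1| <= 1).
  have -> : c * w - c = c * (w - 1) by rewrite mulrBr mulr1.
  by rewrite normrM -[X in _ <= X]mulr1 ler_pM2l.
rewrite -unit_disk_stableP; split=> stable.
- by move=> w; rewrite -(scale w) -(scale (y * w)) mulrCA; apply: stable.
- move=> Z; have [w ->] : exists w, Z = c * w by exists (Z / c); rewrite mulrC divfK.
  by rewrite mulrCA !scale; apply: stable.
Qed.
End DiskThroughOrigin.

Section MobiusCoordinate.
Variable C : numClosedFieldType.
Variable q : C.
Hypothesis hq : 1 < `|q - 1|.

Local Notation a := (q - 1).
Local Notation rho := (`|1 - q|^-1).

(* The coordinate in which the parallel connection is multiplication. *)
Definition mob (Y : C) : C := (Y - 1) / (Y + a).

(* Centre of the disk that mob maps onto D(rho). *)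
Definition center : C := (`|a| ^+ 2 + a) / (`|a| ^+ 2 - 1).

Lemma rhoE : rho = `|a|^-1.
Proof. by rewrite distrC. Qed.

Lemma q_neq0 : q != 0.
Proof. by apply: contraTneq hq => ->; rewrite sub0r normrN1 ltxx. Qed.

Lemma rho_lt1 : rho < 1.
Proof. by rewrite rhoE invf_lt1 // (lt_trans ltr01). Qed.

Lemma normsq_a_gt1 : 1 < `|a| ^+ 2.
Proof. by rewrite exprn_egt1. Qed.

(* The algebraic identity behind the correspondence of the two disks. *)
Lemma disk_identity (Y : C) :
  `|Y + a| ^+ 2 - `|a| ^+ 2 * `|Y - 1| ^+ 2
  = (`|a| ^+ 2 - 1) * (`|center| ^+ 2 - `|Y - center| ^+ 2).
Proof.
have nz : `|a| ^+ 2 - 1 != 0 by rewrite subr_eq0 gt_eqF ?normsq_a_gt1.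
rewrite /center !normCK in nz *.
rewrite !(rmorphB, rmorphD, rmorphM, fmorphV) /= !conjCK !rmorph1 in nz *.
by field; rewrite mulrC.
Qed.

Lemma mob_disk (Y : C) : Y + a != 0 ->
  (`|mob Y| <= rho) = (`|Y - center| <= `|center|).
Proof.
move=> Ya; have a0 : 0 < `|a| by rewrite (lt_trans ltr01).
rewrite rhoE /mob normf_div ler_pdivrMr ?normr_gt0 // ler_pdivlMl //.
rewrite -ler_sqr ?nnegrE ?mulr_ge0 // exprMn -subr_ge0 disk_identity.
by rewrite pmulr_rge0 ?subr_gt0 ?normsq_a_gt1 // subr_ge0 ler_sqr ?nnegrE.
Qed.

Lemma center_disk_avoids (Y : C) : `|Y - center| <= `|center| -> Y + a != 0.
Proof.
apply: contraTneq => Ya.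
have a0 : a != 0 by rewrite -normr_eq0 gt_eqF // (lt_trans ltr01).
have Y1 : Y - 1 != 0.
  have eY : Y = - a by rewrite -[Y](addrK a) Ya sub0r.
  have -> : Y - 1 = - q by rewrite eY; ring.
  by rewrite oppr_eq0 q_neq0.
have := disk_identity Y; rewrite Ya normr0 expr0n /= sub0r => idY.
rewrite lt_geF // -ltr_sqr ?nnegrE // -subr_lt0.
rewrite -(pmulr_rlt0 _ (_ : 0 < `|a| ^+ 2 - 1)) ?subr_gt0 ?normsq_a_gt1 //.
by rewrite -idY oppr_lt0 mulr_gt0 ?exprn_gt0 ?normr_gt0.
Qed.

(* The disk is nondegenerate: it contains 1 = mob^-1 0. *)
Lemma center_neq0 : center != 0.
Proof.
have : `|1 - center| <= `|center|.
  rewrite -mob_disk; last by rewrite addrC subrK q_neq0.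
  by rewrite /mob subrr mul0r normr0 invr_ge0.
by apply: contraTneq => ->; rewrite normr0 subr0 normr1 ler10.
Qed.

Lemma mob_onto (t : C) : `|t| <= rho -> exists2 Y, Y + a != 0 & t = mob Y.
Proof.
move=> ht; have t1 : 1 - t != 0.
  by rewrite subr_eq0; apply: contraTneq ht => <-; rewrite normr1 lt_geF ?rho_lt1.
have Ya : (1 + a * t) / (1 - t) + a = q / (1 - t) by field.
exists ((1 + a * t) / (1 - t)); first by rewrite Ya mulf_neq0 ?invr_eq0 ?q_neq0.
by rewrite /mob Ya; field; rewrite q_neq0 t1.
Qed.

Lemma mob_denominator (Y Z : C) : Y + a != 0 -> Z + a != 0 ->
  (1 + a * mob Y * mob Z != 0) = (Y * Z + a != 0).
Proof.
move=> Ya Za.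
have -> : 1 + a * mob Y * mob Z = q * (Y * Z + a) / ((Y + a) * (Z + a)).
  by rewrite /mob; field; rewrite Ya Za.
by rewrite mulf_eq0 invr_eq0 !mulf_eq0 (negbTE Ya) (negbTE Za) (negbTE q_neq0) /= orbF.
Qed.

Lemma parq_mob (Y Z : C) : Y + a != 0 -> Z + a != 0 -> Y * Z + a != 0 ->
  parq q (mob Y) (mob Z) = mob (Y * Z).
Proof.
move=> Ya Za YZa; rewrite /parq /mob; field.
have -> : (Y + a) * (Z + a) + a * (Y - 1) * (Z - 1) = q * (Y * Z + a) by ring.
by rewrite Ya Za YZa mulf_neq0 ?q_neq0.
Qed.

Definition admissible (t : C) : Prop :=
  forall s : C, disk rho s -> 1 + a * t * s != 0 /\ disk rho (parq q t s).

Lemma admissible_mobP (y : C) : y + a != 0 ->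
  admissible (mob y) <->
  (forall Z : C, `|Z - center| <= `|center| -> `|y * Z - center| <= `|center|).
Proof.
move=> ya; split=> [adm Z hZ | stable s].
- have Za := center_disk_avoids hZ.
  have hs : disk rho (mob Z) by rewrite /disk mob_disk.
  have [den par] := adm _ hs.
  rewrite mob_denominator // in den.
  by rewrite /disk parq_mob // mob_disk in par.
- rewrite /disk => hs; have [Z Za es] := mob_onto hs; rewrite {s}es in hs *.
  have yZ : `|y * Z - center| <= `|center| by apply: stable; rewrite -mob_disk.
  have yZa := center_disk_avoids yZ.
  by rewrite mob_denominator // yZa parq_mob // mob_disk.
Qed.

Lemma parq0 (t : C) : parq q t 0 = t.
Proof. by rewrite /parq !(mulr0, addr0) divr1. Qed.

Lemma admissible_Cq (t : C) : admissible t <-> Cq q t.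
Proof.
split=> [adm | [v [_ [v1 [v0 ->]]]]].
- have ht : `|t| <= rho.
    have h0 : disk rho 0 by rewrite /disk normr0 invr_ge0.
    by have [_] := adm 0 h0; rewrite /disk parq0.
  have [y ya et] := mob_onto ht; rewrite {t ht}et in adm *.
  have := (admissible_mobP ya).1 adm.
  move=> /(disk_through_origin_stableP _ center_neq0) /andP[y0 y1].
  exists (y - 1); split; first by rewrite rpredB ?ger0_real.
  rewrite lerBrDr addNr subr_le0 y1; split=> //; split=> //.
  by rewrite /mob; congr (_ / _); ring.
- have -> : v / (q + v) = mob (v + 1) by rewrite /mob; congr (_ / _); ring.
  have y0 : 0 <= v + 1 by rewrite -lerBlDr sub0r.
  have y1 : v + 1 <= 1 by rewrite -lerBrDr subrr.
  have ya : v + 1 + a != 0.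
    apply: contraTneq hq => /eqP; rewrite addr_eq0 => /eqP ea.
    by rewrite -normrN -ea ger0_norm // le_gtF.
  by apply/(admissible_mobP ya)/disk_through_origin_stableP; rewrite ?center_neq0 ?y0.
Qed.
End MobiusCoordinate.

Theorem lemma7p3 (C : numClosedFieldType) (q : C) (hq : 1 < `|q - 1|) :
  let rho := `|1 - q|^-1 in
  (forall t : C,
     (forall s : C, disk rho s ->
        1 + (q - 1) * t * s != 0 /\ disk rho (parq q t s))
     <-> Cq q t)
  /\
  (forall t s : C, Cq q t -> disk rho s ->
     1 + (q - 1) * t * s != 0 /\ disk rho (parq q t s))
  /\
  (forall S : C -> Prop,
     (forall t s : C, S t -> disk rho s ->
        1 + (q - 1) * t * s != 0 /\ disk rho (parq q t s)) ->
     forall t : C, S t -> Cq q t).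
Proof.
move=> rho; have characterization := admissible_Cq hq.
split; first exact: characterization.
split; first by move=> t s /characterization; apply.
by move=> S closedS t St; apply/characterization => s; apply: closedS.
Qed.
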